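(* Let $k\geq 2$ and let $G$ be a bipartite graph of order $n\geq 11k-4$ that does not contain $k\cdot P_3$ as a subgraph. Then $\rho(G)\leq \sqrt{(k-1)(n-k+1)}$, with equality if and only if $G=K_{k-1,n-k+1}$.
   Context: Graphs are finite and simple; $\rho(G)$ is the largest eigenvalue of the adjacency matrix of $G$. $P_3$ is the path on 3 vertices and $k\cdot P_3$ is the disjoint union of $k$ copies of $P_3$. $K_{a,b}$ is the complete bipartite graph with parts of sizes $a$ and $b$. *)

From HB Require Import structures.
From mathcomp Require Import all_boot all_order all_algebra.
From mathcomp.real_closed Require Import polyrcf.
Set Implicit Arguments. Unset Strict Implicit. Unset Printing Implicit Defensive.
Import Order.TTheory GRing.Theory Num.Theory.
Local Open Scope ring_scope.

Definition simple_graph (T : finType) (e : rel T) : Prop :=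
  symmetric e /\ irreflexive e.

Definition adj_mx (R : nzRingType) (T : finType) (e : rel T) : 'M[R]_#|T| :=
  \matrix_(i, j) (e (enum_val i) (enum_val j))%:R.

Definition spec_rad (R : rcfType) (T : finType) (e : rel T) : R :=
  \big[Num.max/0]_(x <- rootsR (char_poly (adj_mx R e))) x.

Definition bipartite (T : finType) (e : rel T) : Prop :=
  exists A : {set T}, forall x y, e x y -> (x \in A) != (y \in A).

(* G contains k.P3 as a (not necessarily induced) subgraph: an injective map
   from the vertices (i, j) (copy i, position j on the path) into T sending
   the path edges (i,0)-(i,1) and (i,1)-(i,2) to edges of G. *)
Definition contains_kP3 (T : finType) (e : rel T) (k : nat) : Prop :=
  exists f : 'I_k * 'I_3 -> T, injective f /\
    forall i : 'I_k,
      e (f (i, 0%R)) (f (i, 1%R)) /\ e (f (i, 1%R)) (f (i, 2%:R)).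

Definition is_complete_bipartite (T : finType) (e : rel T) (a b : nat) : Prop :=
  exists A : {set T}, #|A| = a /\ #|~: A| = b /\
    forall x y, e x y = ((x \in A) != (y \in A)).

(* Let w be an eigenvector for the eigenvalue lam of a bipartite graph with parts X, ~X
   and m edges.  Cauchy-Schwarz at a vertex y gives (lam w_y)^2 <= deg y * sum of w_x^2 over
   the other side; summing over each side yields lam^2 <= m, and equality forces the supports
   of w on the two sides to span a complete bipartite graph, all other vertices being isolated.

   Edge bound: a k.P3-free bipartite graph on n >= 11k-4 vertices has at most (k-1)(n-k+1)
   edges, by induction on k.  If a side has fewer than k non-isolated vertices the bound is
   immediate.  Deleting a vertex v of degree >= 2k leaves a (k-1).P3-free graph, since a
   (k-1).P3 covers at most 2(k-1) neighbours of v and two more would give a k-th P3 through v.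
   Otherwise all degrees are < 2k, and outside a maximal family of t < k disjoint P3's every
   vertex has at most one neighbour.

   Equality: the complete bipartite graph K_{p,q} on the supports has pq = (k-1)(n-k+1),
   p + q <= n and no k.P3, which forces {p, q} = {k-1, n-k+1}; conversely K_{k-1,n-k+1} has
   the eigenvalue sqrt((k-1)(n-k+1)). *)

From mathcomp Require Import all_boot all_order all_algebra.
From mathcomp.real_closed Require Import polyrcf.
From mathcomp Require Import zify ring lra.
From Stdlib Require Import Classical.

Set Implicit Arguments.
Unset Strict Implicit.
Unset Printing Implicit Defensive.
Import Order.TTheory GRing.Theory Num.Theory.

Lemma nat_threshold (P : nat -> Prop) k :
  P 0 -> ~ P k -> exists2 t, t < k & P t /\ ~ P t.+1.
Proof.
move=> P0; elim: k => [|k IHk] nPk; first by [].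
have [Pk | nPk'] := classic (P k); first by exists k.
by have [t ltk Pt] := IHk nPk'; exists t => //; apply: ltnW.
Qed.

Lemma ord3_cases (j : 'I_3) : [\/ j = 0%R, j = 1%R | j = 2%:R%R].
Proof.
by case: j => -[|[|[|//]]] ?; [constructor 1 | constructor 2 | constructor 3]; apply: val_inj.
Qed.

Lemma sumb_card (T : finType) (P : pred T) : \sum_x P x = #|[set x | P x]|.
Proof. by rewrite -sum1dep_card [RHS]big_mkcond; apply: eq_bigr => x _; case: (P x). Qed.

Lemma sumb_card_in (T : finType) (A : {pred T}) (P : pred T) :
  \sum_(x in A) P x = #|[set x in A | P x]|.
Proof. by rewrite -sum1dep_card big_mkcondr /=; apply: eq_bigr => x _; case: (P x). Qed.

Section Embeddings.
Variables (T : finType) (e : rel T).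

Definition kP3_embedding t (f : 'I_t * 'I_3 -> T) : Prop :=
  injective f /\
  forall i, e (f (i, 0%R)) (f (i, 1%R)) /\ e (f (i, 1%R)) (f (i, 2%:R%R)).

Lemma contains_kP3_0 : contains_kP3 e 0.
Proof.
have f : 'I_0 * 'I_3 -> T by case=> -[].
by exists f; split; [case=> -[] | case].
Qed.

Definition extend_embedding t (f : 'I_t * 'I_3 -> T) (x y z : T)
    (p : 'I_t.+1 * 'I_3) : T :=
  if unlift ord_max p.1 is Some i then f (i, p.2) else nth x [:: x; y; z] p.2.

Lemma contains_kP3_extend t (f : 'I_t * 'I_3 -> T) x y z :
  kP3_embedding f -> uniq [:: x; y; z] -> (forall p, f p \notin [:: x; y; z]) ->
  e x y -> e y z -> contains_kP3 e t.+1.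
Proof.
move=> [inj_f edge_f] uniq_xyz f_xyz exy eyz.
exists (extend_embedding f x y z); split.
- have nth_xyz (j : 'I_3) : nth x [:: x; y; z] j \in [:: x; y; z].
    by rewrite mem_nth.
  move=> [p1 p2] [q1 q2]; rewrite /extend_embedding /=.
  case: unliftP => [i ->|<-]; case: unliftP => [j ->|<-] //.
  + by move=> /inj_f [-> ->].
  + by move=> fp; have := f_xyz (i, p2); rewrite fp nth_xyz.
  + by move=> fq; have := f_xyz (j, q2); rewrite -fq nth_xyz.
  + by move/eqP; rewrite nth_uniq // => /eqP/val_inj ->.
- move=> i; rewrite /extend_embedding.
  by case: unliftP => [j _|_] /=; [apply: edge_f | split].
Qed.

End Embeddings.

Definition deg (T : finType) (e : rel T) (y : T) : nat := #|[set x | e x y]|.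

Definition degree_sum (T : finType) (e : rel T) : nat := \sum_y deg e y.

Definition remove_vertex (T : finType) (e : rel T) (v : T) : rel T :=
  [rel x y | [&& e x y, x != v & y != v]].

Definition complete_between (T : finType) (e : rel T) (P Q : {set T}) : Prop :=
  forall x y, e x y = ((x \in P) && (y \in Q)) || ((x \in Q) && (y \in P)).

Lemma deg_sumE (T : finType) (e : rel T) y : deg e y = \sum_x e x y.
Proof. by rewrite sumb_card. Qed.

Section Counting.
Variables (T : finType) (e : rel T).
Hypothesis esym : symmetric e.

Lemma deg_nbhd_in (A : {set T}) y :
  (forall x, e x y -> x \in A) -> deg e y = #|[set x in A | e x y]|.
Proof.
move=> nbhd_A; apply: eq_card => x; rewrite !inE.
by case exy: (e x y); rewrite ?andbT ?andbF ?nbhd_A.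
Qed.

Lemma double_count (A B : {set T}) :
  \sum_(y in B) #|[set x in A | e x y]| = \sum_(x in A) #|[set y in B | e y x]|.
Proof.
transitivity (\sum_(y in B) \sum_(x in A) e x y).
  by apply: eq_bigr => y _; rewrite sumb_card_in.
rewrite exchange_big; apply: eq_bigr => x _.
by rewrite sumb_card_in; apply: eq_card => y; rewrite !inE esym.
Qed.

Lemma degree_sum_remove_vertex v :
  degree_sum e <= degree_sum (remove_vertex e v) + 2 * deg e v.
Proof.
have pick_v (F : T -> bool) : \sum_x (F x && (x == v)) = F v.
  by rewrite (bigD1 v) //= eqxx andbT big1 ?addn0 // => x /negPf ->; rewrite andbF.
rewrite /degree_sum mul2n -addnn addnA.
under eq_bigr do rewrite deg_sumE.
under [X in X + _ + _]eq_bigr do rewrite deg_sumE.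
have deg_src : deg e v = \sum_y \sum_x (e x y && (x == v)).
  by rewrite deg_sumE; apply: eq_bigr => y _; rewrite pick_v esym.
have deg_tgt : deg e v = \sum_y \sum_x (e x y && (y == v)).
  by rewrite exchange_big deg_sumE; apply: eq_bigr => x _; rewrite pick_v.
rewrite {1}deg_src deg_tgt.
rewrite -!big_split /=; apply: leq_sum => y _; rewrite -!big_split /=.
apply: leq_sum => x _; rewrite /remove_vertex /=.
by case: (e x y) (x == v) (y == v) => [] [] [].
Qed.

Section Bipartition.
Variable X : {set T}.
Hypothesis bipX : forall x y, e x y -> (x \in X) != (y \in X).

Lemma bipartition_setC x y : e x y -> (x \in ~: X) != (y \in ~: X).
Proof. by rewrite !inE; case: (x \in X) (y \in X) (bipX (x := x) (y := y)) => [] []. Qed.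

Lemma nbhd_opposite x y : e x y -> (x \in X) = (y \notin X).
Proof. by move/bipX; case: (x \in X) (y \in X) => [] []. Qed.

Lemma sum_deg_sides : \sum_(y in X) deg e y = \sum_(y in ~: X) deg e y.
Proof.
transitivity (\sum_(y in X) #|[set x in ~: X | e x y]|).
  by apply: eq_bigr => y yX; apply: deg_nbhd_in => x /nbhd_opposite; rewrite inE yX => ->.
rewrite double_count; apply: eq_bigr => x; rewrite inE => xNX.
by rewrite (deg_nbhd_in (A := X)) // => y /nbhd_opposite; rewrite xNX.
Qed.

Lemma degree_sum_sides : degree_sum e = 2 * \sum_(y in X) deg e y.
Proof.
rewrite /degree_sum (bigID (mem X)) /= mul2n -addnn; congr (_ + _).
by rewrite sum_deg_sides; apply: eq_bigl => y; rewrite inE.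
Qed.

End Bipartition.
End Counting.

Section Support.
Variables (T : finType) (e : rel T) (W X : {set T}).
Hypotheses (esym : symmetric e) (eirr : irreflexive e).
Hypothesis eW : forall x y, e x y -> x \in W.
Hypothesis bipX : forall x y, e x y -> (x \in X) != (y \in X).

Lemma edge_neq x y : e x y -> x != y.
Proof. by apply: contraTneq => ->; rewrite eirr. Qed.

Lemma deg_notin_support y : y \notin W -> deg e y = 0.
Proof.
move=> yNW; apply/eqP; rewrite cards_eq0; apply/eqP/setP => x; rewrite !inE.
by apply: contraNF yNW; rewrite esym => /eW.
Qed.

Lemma card_nbhd_in_le_deg (A : {set T}) y : #|[set x in A | e x y]| <= deg e y.
Proof. by apply: subset_leq_card; apply/subsetP => x; rewrite !inE => /andP[]. Qed.

Lemma deg_split (A : {set T}) y :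
  deg e y = #|[set x in A | e x y]| + #|[set x in ~: A | e x y]|.
Proof.
rewrite -!sumb_card_in deg_sumE (bigID (mem A)) /=; congr (_ + _).
by apply: eq_bigl => x; rewrite inE.
Qed.

Lemma deg_le_opposite y : y \in X -> deg e y <= #|W :\: X|.
Proof.
move=> yX; apply: subset_leq_card; apply/subsetP => x; rewrite !inE => exy.
by rewrite (eW exy) andbT (nbhd_opposite bipX exy) yX.
Qed.

Lemma sum_deg_le_card c :
  (forall y, y \in W :&: X -> deg e y <= c) -> \sum_(y in X) deg e y <= #|W :&: X| * c.
Proof.
move=> deg_c; rewrite -sum_nat_const (big_setID W) /= setIC.
rewrite [X in _ + X]big1 ?addn0 => [|y /setDP [_ yNW]]; last exact: deg_notin_support.
exact: leq_sum.
Qed.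

Lemma degree_sum_small_side k :
  #|W :&: X| < k -> 2 * k <= #|W| -> degree_sum e <= 2 * ((k - 1) * (#|W| - k + 1)).
Proof.
move=> small_X large_W; rewrite (degree_sum_sides esym bipX) leq_mul2l /=.
apply: leq_trans (sum_deg_le_card (c := #|W :\: X|) _) _.
  by move=> y /setIP [_ yX]; apply: deg_le_opposite.
rewrite -(cardsID X W) in large_W *; nia.
Qed.

Lemma kP3_embedding_in_support t (f : 'I_t * 'I_3 -> T) p :
  kP3_embedding e f -> f p \in W.
Proof.
case: p => i j [_ /(_ i) [e01 e12]].
have e21 : e (f (i, 2%:R%R)) (f (i, 1%R)) by rewrite esym.
by case: (ord3_cases j) => ->; [apply: eW e01 | apply: eW e12 | apply: eW e21].
Qed.

Lemma kP3_embedding_off_side t (f : 'I_t * 'I_3 -> T) :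
  kP3_embedding e f -> #|[set p | f p \notin X]| <= 2 * t.
Proof.
move=> [_ edge_f].
have -> : #|[set p | f p \notin X]| = \sum_i \sum_j (f (i, j) \notin X).
  by rewrite -sumb_card pair_bigA; apply: eq_bigr => -[].
apply: (@leq_trans (\sum_(i < t) 2)); last by rewrite sum_nat_const card_ord mulnC.
apply: leq_sum => i _; rewrite sumb_card -ltnS.
have : [set j | f (i, j) \notin X] \proper setT.
  rewrite properT; apply/negP => /eqP all_off; have [e01 _] := edge_f i.
  have off0 : (0%R : 'I_3) \in [set j | f (i, j) \notin X] by rewrite all_off inE.
  have off1 : (1%R : 'I_3) \in [set j | f (i, j) \notin X] by rewrite all_off inE.
  by move: off0 off1 (bipX e01); rewrite !inE => /negPf -> /negPf ->.
by move/proper_card; rewrite cardsT card_ord.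
Qed.

Lemma deg_le1_off_embedding t (f : 'I_t * 'I_3 -> T) (A : {set T}) y :
  kP3_embedding e f -> ~ contains_kP3 e t.+1 -> (forall p, f p \notin A) ->
  y \in A -> #|[set x in A | e x y]| <= 1.
Proof.
move=> emb_f max_f f_A yA; rewrite leqNgt; apply/negP => /card_gt1P [x [z []]].
rewrite !inE => /andP [xA exy] /andP [zA ezy] xz.
have uniq_xyz : uniq [:: x; y; z].
  by rewrite /= !inE negb_or edge_neq // xz /= eq_sym edge_neq.
have f_xyz p : f p \notin [:: x; y; z].
  by rewrite !inE; apply/or3P => -[] /eqP fp; have := f_A p; rewrite fp ?xA ?yA ?zA.
by apply: max_f; apply: (contains_kP3_extend emb_f uniq_xyz f_xyz exy); rewrite esym.
Qed.

Lemma deg_le1_of_P3_free y : ~ contains_kP3 e 1 -> deg e y <= 1.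
Proof.
move=> free; have [f emb_f] := contains_kP3_0 e.
rewrite (deg_nbhd_in (A := setT)) //.
by apply: (deg_le1_off_embedding emb_f) => //; case=> -[].
Qed.

Lemma degree_sum_P3_free : ~ contains_kP3 e 1 -> degree_sum e <= 2 * #|W :&: X|.
Proof.
move=> free; rewrite (degree_sum_sides esym bipX) leq_mul2l -[X in _ <= X]muln1 /=.
by apply: sum_deg_le_card => y _; apply: deg_le1_of_P3_free.
Qed.

Lemma kP3_free_remove_vertex k v :
  v \in X -> 2 * k.+1 <= deg e v -> ~ contains_kP3 e k.+1 ->
  ~ contains_kP3 (remove_vertex e v) k.
Proof.
move=> vX high_v free [f [inj_f edge_f]].
have emb_f : kP3_embedding e f.
  by split=> // i; have [/and3P [e01 _ _] /and3P [e12 _ _]] := edge_f i.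
have f_v p : f p != v.
  case: p => i j; have [/and3P [_ f0v f1v] /and3P [_ _ f2v]] := edge_f i.
  by case: (ord3_cases j) => ->.
set S := f @: setT.
have vNS : v \in ~: S.
  by rewrite inE; apply/imsetP => -[p _ /eqP]; rewrite eq_sym (negPf (f_v p)).
have out_S : #|[set x in ~: S | e x v]| <= 1.
  by apply: (deg_le1_off_embedding emb_f free) => // p; rewrite inE negbK imset_f.
have in_S : #|[set x in S | e x v]| <= 2 * k.
  apply: leq_trans (kP3_embedding_off_side emb_f).
  apply: leq_trans (leq_imset_card f _); apply: subset_leq_card.
  apply/subsetP => _ /setIdP [/imsetP [p _ ->] fpv]; apply: imset_f.
  by rewrite inE (nbhd_opposite bipX fpv) vX.
by move: high_v; rewrite (deg_split S); lia.
Qed.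

Lemma degree_sum_max_embedding c t (f : 'I_t * 'I_3 -> T) :
  (forall y, deg e y <= c) -> kP3_embedding e f -> ~ contains_kP3 e t.+1 ->
  degree_sum e <= 2 * (3 * t * c) + (#|W| - 3 * t).
Proof.
move=> deg_c emb_f max_f; set S := f @: setT.
have card_S : #|S| = 3 * t.
  by rewrite card_imset; [rewrite cardsT card_prod !card_ord mulnC | case: emb_f].
have sub_SW : S \subset W.
  by apply/subsetP => _ /imsetP [p _ ->]; apply: kP3_embedding_in_support.
have in_S : \sum_(y in S) deg e y <= 3 * t * c.
  by rewrite -card_S -sum_nat_const; apply: leq_sum.
have S_to_out : \sum_(y in ~: S) #|[set x in S | e x y]| <= 3 * t * c.
  rewrite double_count //; apply: leq_trans in_S.
  by apply: leq_sum => x _; apply: card_nbhd_in_le_deg.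
have out_to_out : \sum_(y in ~: S) #|[set x in ~: S | e x y]| <= #|W| - 3 * t.
  have -> : #|W| - 3 * t = \sum_(y in ~: S) (y \in W).
    rewrite -card_S -[in X in _ - X](setIidPr sub_SW) -cardsD sumb_card_in.
    by apply: eq_card => y; rewrite !inE andbC.
  apply: leq_sum => y yNS; case: (boolP (y \in W)) => [_ /= | yNW /=].
    by apply: (deg_le1_off_embedding emb_f max_f) => // p; rewrite inE negbK imset_f.
  by rewrite -(deg_notin_support yNW) card_nbhd_in_le_deg.
rewrite /degree_sum (bigID (mem S)) /=.
have -> : \sum_(y | y \notin S) deg e y =
    \sum_(y in ~: S) #|[set x in S | e x y]| + \sum_(y in ~: S) #|[set x in ~: S | e x y]|.
  by rewrite -big_split /=; apply: eq_big => [y | y _]; [rewrite inE | apply: deg_split].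
lia.
Qed.

End Support.

(* W stands for the vertex set: it contains every non-isolated vertex, so deleting a vertex
   shrinks W without changing the vertex type. [degree_sum] counts each edge twice. *)
Definition kP3_free_degree_bound (T : finType) (k : nat) : Prop :=
  forall (e : rel T) (W X : {set T}), symmetric e -> irreflexive e ->
  (forall x y, e x y -> x \in W) -> (forall x y, e x y -> (x \in X) != (y \in X)) ->
  ~ contains_kP3 e k -> 11 * k - 4 <= #|W| ->
  degree_sum e <= 2 * ((k - 1) * (#|W| - k + 1)).

Section HighDegree.
Variables (T : finType) (e : rel T) (W X : {set T}).
Hypotheses (esym : symmetric e) (eirr : irreflexive e).
Hypothesis eW : forall x y, e x y -> x \in W.
Hypothesis bipX : forall x y, e x y -> (x \in X) != (y \in X).

Lemma degree_sum_high_degree k v : 0 < k ->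
  (1 < k -> kP3_free_degree_bound T k) -> ~ contains_kP3 e k.+1 ->
  11 * k.+1 - 4 <= #|W| -> v \in X -> 2 * k.+1 <= deg e v -> k.+1 <= #|W :&: X| ->
  degree_sum e <= 2 * ((k.+1 - 1) * (#|W| - k.+1 + 1)).
Proof.
move=> k_gt0 IHk free large_W vX high_v large_X.
set e' := remove_vertex e v.
have esym' : symmetric e'.
  by move=> x y; rewrite /e' /remove_vertex /= esym [(y != v) && _]andbC.
have eirr' : irreflexive e' by move=> x; rewrite /e' /remove_vertex /= eirr.
have eW' x y : e' x y -> x \in W :\ v by case/and3P=> exy xv _; rewrite !inE xv (eW exy).
have bipX' x y : e' x y -> (x \in X) != (y \in X) by case/and3P=> exy _ _; apply: bipX.
have free' := kP3_free_remove_vertex esym eirr bipX vX high_v free.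
have vW : v \in W.
  by apply: contraTT high_v => /(deg_notin_support esym eW) ->; rewrite -ltnNge muln_gt0.
have card_W' : #|W :\ v| = #|W| - 1 by rewrite (cardsD1 v W) vW add1n subSS subn0.
have card_WX' : #|(W :\ v) :&: X| = #|W :&: X| - 1.
  by rewrite setIDAC (cardsD1 v (W :&: X)) inE vW vX add1n subSS subn0.
have remove_v : degree_sum e <= degree_sum e' + 2 * deg e v.
  exact: degree_sum_remove_vertex.
have deg_v := deg_le_opposite eW bipX vX.
have split_W := cardsID X W.
case: (ltnP 1 k) => [k_gt1 | k_le1].
  have bound' : degree_sum e' <= 2 * ((k - 1) * (#|W :\ v| - k + 1)).
    by apply: (IHk k_gt1 e' (W :\ v) X) => //; rewrite card_W'; lia.
  have km : k * (#|W| - k) = (#|W| - k) + (k - 1) * (#|W| - k).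
    by rewrite -mulSn subn1 prednK // ltnW.
  have -> : (k.+1 - 1) * (#|W| - k.+1 + 1) = k * (#|W| - k) by congr (_ * _); lia.
  have W'k : #|W :\ v| - k + 1 = #|W| - k by lia.
  rewrite W'k in bound'; lia.
have k1 : k = 1 by lia.
subst k; have := degree_sum_P3_free esym' eirr' eW' bipX' free'; rewrite card_WX'; lia.
Qed.

End HighDegree.

Theorem degree_sum_kP3_free (T : finType) k : 1 < k -> kP3_free_degree_bound T k.
Proof.
elim: k => [|k IHk] // k_gt1 e W X esym eirr eW bipX free large_W.
have large_W2 : 2 * k.+1 <= #|W| by lia.
have [small_X | large_X] := ltnP #|W :&: X| k.+1.
  exact: degree_sum_small_side esym eW bipX k.+1 small_X large_W2.
have bipNX := bipartition_setC bipX.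
have [small_NX | large_NX] := ltnP #|W :&: ~: X| k.+1.
  exact: degree_sum_small_side esym eW bipNX k.+1 small_NX large_W2.
have [/existsP [v high_v] | /existsPn low] := boolP [exists v, 2 * k.+1 <= deg e v].
  have k_gt0 : 0 < k by lia.
  have [vX | vNX] := boolP (v \in X).
    exact: (degree_sum_high_degree esym eirr eW bipX k_gt0 IHk free large_W vX high_v).
  have vNX' : v \in ~: X by rewrite inE.
  exact: (degree_sum_high_degree esym eirr eW bipNX k_gt0 IHk free large_W vNX' high_v).
have deg_le y : deg e y <= 2 * k.+1 - 1 by move: (low y); rewrite -ltnNge; lia.
have [t lt_tk [[f emb_f] max_f]] := nat_threshold (contains_kP3_0 e) free.
apply: leq_trans (degree_sum_max_embedding esym eirr eW deg_le emb_f max_f) _.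
nia.
Qed.

Lemma extremal_factorization k n p q :
  1 < k -> 11 * k - 4 <= n -> p * q = (k - 1) * (n - k + 1) -> p + q <= n ->
  ~ (k <= p /\ 2 * k <= q) -> ~ (k <= q /\ 2 * k <= p) ->
  p = k - 1 /\ q = n - k + 1 \/ q = k - 1 /\ p = n - k + 1.
Proof.
move=> k_gt1 n_large.
wlog le_pq : p q / p <= q => [hwlog pq_eq pq_le no_pq no_qp|].
  have [le_pq | /ltnW le_qp] := leqP p q; first exact: hwlog.
  by rewrite or_comm; apply: hwlog => //; [rewrite mulnC | rewrite addnC].
move=> pq_eq pq_le no_pq _; left.
have p_small : p < k.
  rewrite ltnNge; apply/negP => p_large.
  have q_small : q < 2 * k by rewrite ltnNge; apply/negP => q_large; apply: no_pq.
  have : p * q <= (2 * k - 1) * (2 * k - 1) by apply: leq_mul; lia.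
  nia.
have p_eq : p = k - 1.
  apply/eqP; rewrite eqn_leq -ltnS (_ : (k - 1).+1 = k) ?p_small //=; last by lia.
  rewrite leqNgt; apply/negP => p_lt.
  have : p * q <= p * (n - p) by apply: leq_mul; lia.
  nia.
split=> //; apply/eqP; rewrite -(eqn_pmul2l (_ : 0 < k - 1)) -?p_eq ?pq_eq //; lia.
Qed.

Section CompleteBetween.
Variables (T : finType) (e : rel T).
Hypothesis esym : symmetric e.

Lemma sum_deg_complete_between (X P Q : {set T}) :
  P \subset X -> Q \subset ~: X -> complete_between e P Q ->
  \sum_(y in X) deg e y = #|P| * #|Q|.
Proof.
move=> sub_PX sub_QNX ePQ.
rewrite (eq_bigr (fun y => (y \in P) * #|Q|)) => [|y yX].
  rewrite -big_distrl /= sumb_card_in; congr (_ * _); apply: eq_card => y.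
  by rewrite !inE andb_idl // => /(subsetP sub_PX).
have yNQ : y \notin Q by apply: contraL yX => /(subsetP sub_QNX); rewrite inE.
rewrite /deg; case: (boolP (y \in P)) => yP; rewrite ?mul1n ?mul0n.
  by apply: eq_card => x; rewrite inE ePQ yP (negPf yNQ) andbF andbT.
apply/eqP; rewrite cards_eq0; apply/eqP/setP => x.
by rewrite !inE ePQ (negPf yP) (negPf yNQ) !andbF.
Qed.

Lemma kP3_in_complete_between k (P Q : {set T}) :
  [disjoint P & Q] -> k <= #|P| -> 2 * k <= #|Q| ->
  (forall x y, x \in P -> y \in Q -> e x y) -> contains_kP3 e k.
Proof.
move=> disj_PQ k_P k_Q ePQ; case: k k_P k_Q => [|k] k_P k_Q; first exact: contains_kP3_0.
have [x0 _] : exists x0, x0 \in P by apply/set0Pn; rewrite -card_gt0; lia.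
set s := enum P ++ enum Q.
have size_s : size s = #|P| + #|Q| by rewrite size_cat -!cardE.
have uniq_s : uniq s.
  rewrite cat_uniq !enum_uniq andbT /=; apply/hasPn => x.
  by rewrite !mem_enum => xQ; rewrite (disjointFl disj_PQ xQ).
have s_P n : n < #|P| -> nth x0 s n \in P.
  by move=> ltn; rewrite nth_cat -cardE ltn -mem_enum mem_nth // -cardE.
have s_Q n : n < #|Q| -> nth x0 s (#|P| + n) \in Q.
  by move=> ltn; rewrite nth_cat -cardE ltnNge leq_addr /= addKn -mem_enum mem_nth // -cardE.
(* Path i has centre P_i and ends Q_(2i), Q_(2i+1), indexed in s = P ++ Q. *)
pose idx (p : 'I_k.+1 * 'I_3) : nat :=
  if p.2 == 1 :> nat then p.1 : nat else #|P| + (2 * p.1 + (p.2 == 2 :> nat)).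
have idx_inj : injective idx.
  move=> [i [[|[|[|j]]] lt_j]] [i' [[|[|[|j']]] lt_j']] //=; rewrite /idx /=;
  have := ltn_ord i; have := ltn_ord i'; move=> *;
  first [exfalso; lia | congr pair; apply: val_inj => /=; lia].
have idx_lt p : idx p < size s.
  rewrite size_s /idx; have := ltn_ord p.1.
  by case: ifP => _; case: (p.2 == 2 :> nat) => /=; lia.
exists (fun p => nth x0 s (idx p)); split.
  by move=> p q /eqP; rewrite nth_uniq ?idx_lt // => /eqP /idx_inj.
move=> i; rewrite /idx /=.
have iP : nth x0 s i \in P by apply: s_P; have := ltn_ord i; lia.
have Q0 : nth x0 s (#|P| + (2 * i + 0)) \in Q by apply: s_Q; have := ltn_ord i; lia.
have Q1 : nth x0 s (#|P| + (2 * i + 1)) \in Q by apply: s_Q; have := ltn_ord i; lia.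
by rewrite esym !ePQ.
Qed.

Lemma complete_bipartite_of_between (P Q : {set T}) :
  [disjoint P & Q] -> #|P| + #|Q| = #|T| -> complete_between e P Q ->
  is_complete_bipartite e #|P| #|Q|.
Proof.
move=> disj_PQ card_PQ ePQ.
have card_NP : #|~: P| = #|Q| by have := cardsC P; lia.
have Q_NP : Q = ~: P.
  apply/eqP; rewrite eqEcard card_NP leqnn andbT.
  by rewrite -disjoints_subset disjoint_sym.
exists P; split=> //; split=> // x y; rewrite ePQ Q_NP !inE.
by case: (x \in P); case: (y \in P).
Qed.

Lemma complete_between_extremal k (P Q : {set T}) :
  1 < k -> 11 * k - 4 <= #|T| -> [disjoint P & Q] -> complete_between e P Q ->
  ~ contains_kP3 e k -> #|P| * #|Q| = (k - 1) * (#|T| - k + 1) ->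
  is_complete_bipartite e (k - 1) (#|T| - k + 1).
Proof.
move=> k_gt1 n_large disj_PQ ePQ free card_PQ.
have ePQ' : complete_between e Q P by move=> x y; rewrite ePQ orbC.
have disj_QP : [disjoint Q & P] by rewrite disjoint_sym.
have no_kP3 (A B : {set T}) :
    [disjoint A & B] -> complete_between e A B -> ~ (k <= #|A| /\ 2 * k <= #|B|).
  move=> disj_AB eAB [k_A k_B]; apply: free.
  by apply: (kP3_in_complete_between disj_AB k_A k_B) => x y xA yB; rewrite eAB xA yB.
have card_U : #|P :|: Q| = #|P| + #|Q|.
  by rewrite cardsU; move: disj_PQ; rewrite -setI_eq0 => /eqP ->; rewrite cards0 subn0.
have le_PQ : #|P| + #|Q| <= #|T| by rewrite -card_U max_card.
have [[card_P card_Q] | [card_Q card_P]] := extremal_factorization k_gt1 n_large card_PQ le_PQ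
  (no_kP3 _ _ disj_PQ ePQ) (no_kP3 _ _ disj_QP ePQ').
  by rewrite -card_P -card_Q; apply: complete_bipartite_of_between => //; lia.
by rewrite -card_P -card_Q; apply: complete_bipartite_of_between => //; lia.
Qed.

End CompleteBetween.

Section CauchySchwarz.
Local Open Scope ring_scope.
Variables (R : realFieldType) (I : finType).

Lemma sqr_sum_le_card (P : pred I) (c : I -> R) :
  (\sum_(i | P i) c i) ^+ 2 <= #|[set i | P i]|%:R * \sum_(i | P i) c i ^+ 2.
Proof.
set S := \sum_(i | P i) c i; set Q := \sum_(i | P i) c i ^+ 2.
have card_P : #|[set i | P i]|%:R = \sum_(i | P i) (1 : R).
  by rewrite sumr_const cardsE.
have inner i : \sum_(j | P j) (c i - c j) ^+ 2 =
    c i ^+ 2 * #|[set i | P i]|%:R - 2 * c i * S + Q.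
  rewrite card_P mulr_sumr /S mulr_sumr /Q -sumrB -big_split /=.
  by apply: eq_bigr => j _; ring.
have : 0 <= \sum_(i | P i) \sum_(j | P j) (c i - c j) ^+ 2.
  by do 2!(apply: sumr_ge0 => ? _); apply: sqr_ge0.
rewrite (eq_bigr _ (fun i _ => inner i)) big_split sumrB /= -!mulr_suml.
rewrite -mulr_sumr -/Q -/S sumr_const -[Q *+ _]mulr_natr cardsE.
lra.
Qed.

End CauchySchwarz.

Section Eigenfunction.
Local Open Scope ring_scope.
Variables (R : realFieldType) (T : finType) (e : rel T) (w : T -> R) (lam : R).
Hypothesis eigen : forall y, \sum_(x | e x y) w x = lam * w y.

Definition sqnorm (Z : {set T}) : R := \sum_(x in Z) w x ^+ 2.

Lemma eigen_cauchy_schwarz y :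
  (lam * w y) ^+ 2 <= (deg e y)%:R * \sum_(x | e x y) w x ^+ 2.
Proof. by rewrite -eigen; apply: sqr_sum_le_card. Qed.

Section OneSide.
Variable Z : {set T}.
Hypothesis nbhd_Z : forall x y, y \notin Z -> e x y -> x \in Z.

Lemma sqnorm_split y : y \notin Z ->
  sqnorm Z = \sum_(x | e x y) w x ^+ 2 + \sum_(x in Z | ~~ e x y) w x ^+ 2.
Proof.
move=> yNZ; rewrite /sqnorm (bigID (e^~ y)) /=; congr (_ + _).
by apply: eq_bigl => x; case exy: (e x y); rewrite ?andbT ?andbF ?(nbhd_Z yNZ exy).
Qed.

Lemma eigen_vertex_le y : y \notin Z -> (lam * w y) ^+ 2 <= (deg e y)%:R * sqnorm Z.
Proof.
move=> yNZ; apply: le_trans (eigen_cauchy_schwarz y) _.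
rewrite ler_wpM2l // (sqnorm_split yNZ) lerDl.
by apply: sumr_ge0 => x _; apply: sqr_ge0.
Qed.

Lemma eigen_side_le :
  lam ^+ 2 * sqnorm (~: Z) <= (\sum_(y in ~: Z) deg e y)%:R * sqnorm Z.
Proof.
rewrite /sqnorm mulr_sumr natr_sum mulr_suml; apply: ler_sum => y.
by rewrite inE -exprMn; apply: eigen_vertex_le.
Qed.

Lemma eigen_side_eq : lam != 0 -> 0 < sqnorm Z ->
    lam ^+ 2 * sqnorm (~: Z) = (\sum_(y in ~: Z) deg e y)%:R * sqnorm Z ->
  forall x y, x \in Z -> y \notin Z ->
  (e x y -> w y != 0) /\ (w x != 0 -> w y != 0 -> e x y).
Proof.
move=> lam_neq0 pos_Z eq_Z x y xZ yNZ.
have tight_y : (deg e y)%:R * sqnorm Z = (lam * w y) ^+ 2.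
  have slack_ge0 z : z \in ~: Z -> 0 <= (deg e z)%:R * sqnorm Z - (lam * w z) ^+ 2.
    by rewrite inE subr_ge0; apply: eigen_vertex_le.
  have slack_sum : \sum_(z in ~: Z) ((deg e z)%:R * sqnorm Z - (lam * w z) ^+ 2) = 0.
    rewrite sumrB -mulr_suml -natr_sum -eq_Z /sqnorm mulr_sumr.
    by apply/eqP; rewrite subr_eq0; apply/eqP/eq_bigr => z _; rewrite exprMn.
  by apply/eqP; rewrite -subr_eq0; apply/eqP/(psumr_eq0P slack_ge0 slack_sum); rewrite inE.
have wy_deg : (w y == 0) = (deg e y == 0)%N.
  have := congr1 (eq_op^~ 0) tight_y; rewrite /= mulf_eq0 pnatr_eq0 (gt_eqF pos_Z) orbF.
  by rewrite sqrf_eq0 mulf_eq0 (negPf lam_neq0) => ->.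
split=> [exy | wx_neq0 wy_neq0].
  by rewrite wy_deg -lt0n; apply/card_gt0P; exists x; rewrite inE.
apply: contraTT wx_neq0 => nexy; rewrite negbK.
have deg_pos : (0 < deg e y)%N by rewrite lt0n -wy_deg.
have : sqnorm Z <= \sum_(x | e x y) w x ^+ 2.
  rewrite -(ler_pM2l (_ : 0 < (deg e y)%:R)) ?ltr0n // tight_y.
  exact: eigen_cauchy_schwarz.
rewrite (sqnorm_split yNZ) gerDl (bigD1 x) /=; last by rewrite xZ.
move=> le0; have : w x ^+ 2 <= 0.
  by apply: le_trans le0; rewrite lerDl; apply: sumr_ge0 => ? _; apply: sqr_ge0.
by rewrite le_eqVlt ltNge sqr_ge0 orbF sqrf_eq0.
Qed.

End OneSide.

Section Bipartite.
Variable X : {set T}.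
Hypotheses (esym : symmetric e) (bipX : forall x y, e x y -> (x \in X) != (y \in X)).
Hypothesis w_neq0 : exists x, w x != 0.

Lemma nbhd_X x y : y \notin X -> e x y -> x \in X.
Proof. by move=> yNX /(nbhd_opposite bipX) ->. Qed.

Lemma nbhd_setC x y : y \notin ~: X -> e x y -> x \in ~: X.
Proof. by rewrite !inE negbK => yX /(nbhd_opposite bipX) ->; rewrite yX. Qed.

Lemma sqnorm_sides_gt0 : 0 < sqnorm X + sqnorm (~: X).
Proof.
have [x0 wx0_neq0] := w_neq0.
have -> : sqnorm X + sqnorm (~: X) = \sum_x w x ^+ 2.
  by rewrite /sqnorm [RHS](bigID (mem X)); congr (_ + _); apply: eq_bigl => x; rewrite inE.
have wx0_gt0 : 0 < w x0 ^+ 2 by rewrite lt_def sqrf_eq0 wx0_neq0 sqr_ge0.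
have rest_ge0 : 0 <= \sum_(x | x != x0) w x ^+ 2.
  by apply: sumr_ge0 => x _; apply: sqr_ge0.
by rewrite (bigD1 x0) //=; lra.
Qed.

Lemma eigen_sides_le :
  lam ^+ 2 * sqnorm (~: X) <= (\sum_(y in X) deg e y)%:R * sqnorm X /\
  lam ^+ 2 * sqnorm X <= (\sum_(y in X) deg e y)%:R * sqnorm (~: X).
Proof.
split; first by rewrite (sum_deg_sides esym bipX); apply: eigen_side_le nbhd_X.
by have := eigen_side_le nbhd_setC; rewrite !setCK.
Qed.

Lemma eigen_sqr_le_edges : lam ^+ 2 <= (\sum_(y in X) deg e y)%:R.
Proof.
have [le_X le_NX] := eigen_sides_le.
by rewrite -(ler_pM2r sqnorm_sides_gt0) !mulrDr; lra.
Qed.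

Lemma eigen_sqr_eq_edges : lam != 0 -> lam ^+ 2 = (\sum_(y in X) deg e y)%:R ->
  forall x y, x \in X -> y \notin X -> e x y = (w x != 0) && (w y != 0).
Proof.
move=> lam_neq0 lam_m; have [le_X le_NX] := eigen_sides_le; rewrite -lam_m in le_X le_NX.
have lam2_gt0 : 0 < lam ^+ 2 by rewrite lt_def sqrf_eq0 lam_neq0 sqr_ge0.
have sides_eq : sqnorm X = sqnorm (~: X).
  rewrite !(ler_pM2l lam2_gt0) in le_X le_NX.
  by apply/eqP; rewrite eq_le le_X le_NX.
have pos_X : 0 < sqnorm X by have := sqnorm_sides_gt0; rewrite -sides_eq; lra.
have pos_NX : 0 < sqnorm (~: X) by rewrite -sides_eq.
move=> x y xX yNX.
have [] := eigen_side_eq nbhd_X lam_neq0 pos_X _ xX yNX.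
  by rewrite -(sum_deg_sides esym bipX) -lam_m sides_eq.
have yNX' : y \in ~: X by rewrite inE.
have xNNX : x \notin ~: X by rewrite inE negbK.
have [] := eigen_side_eq nbhd_setC lam_neq0 pos_NX _ yNX' xNNX.
  by rewrite !setCK -lam_m sides_eq.
move=> edge_wx _ edge_wy support_edge; apply/idP/andP => [exy | [wx wy]].
  by rewrite edge_wy // edge_wx // esym.
exact: support_edge.
Qed.

End Bipartite.
End Eigenfunction.

Lemma mem_rootsR (R : rcfType) (p : {poly R}) x : p != 0%R -> (x \in rootsR p) = root p x.
Proof. by move=> p_neq0; rewrite -roots_on_rootsR. Qed.

Section AdjacencySpectrum.
Local Open Scope ring_scope.
Variables (R : rcfType) (T : finType) (e : rel T).

Lemma row_mul_adj_mx (v : 'rV[R]_#|T|) y :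
  (v *m adj_mx R e) 0 (enum_rank y) = \sum_(x | e x y) v 0 (enum_rank x).
Proof.
rewrite mxE (reindex (@enum_rank T)) /=; last first.
  by exists enum_val => x _; rewrite ?enum_rankK ?enum_valK.
rewrite [RHS]big_mkcond; apply: eq_bigr => x _; rewrite mxE !enum_rankK.
by case: (e x y); rewrite ?mulr1 ?mulr0.
Qed.

Lemma root_adj_mxP lam :
  lam \in rootsR (char_poly (adj_mx R e)) <->
  exists2 w : T -> R, (exists x, w x != 0) & forall y, \sum_(x | e x y) w x = lam * w y.
Proof.
rewrite mem_rootsR ?monic_neq0 ?char_poly_monic // -eigenvalue_root_char.
split=> [/eigenvalueP [v v_eigen v_neq0] | [w [x0 wx0_neq0] w_eigen]].
  exists (fun x => v 0 (enum_rank x)) => [|y].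
    have /existsP [j vj_neq0] : [exists j, v 0 j != 0].
      apply: contraR v_neq0 => /existsPn v0; apply/eqP/rowP => j.
      by rewrite mxE; apply/eqP/negPn.
    by exists (enum_val j); rewrite enum_valK.
  by rewrite -row_mul_adj_mx v_eigen mxE.
apply/eigenvalueP; exists (\row_j w (enum_val j)).
  apply/rowP => j; rewrite -(enum_valK j) row_mul_adj_mx !mxE enum_rankK -w_eigen.
  by apply: eq_bigr => x _; rewrite mxE enum_rankK.
apply/eqP => /rowP /(_ (enum_rank x0)); rewrite !mxE enum_rankK => /eqP.
by rewrite (negPf wx0_neq0).
Qed.

Lemma le_spec_rad lam : lam \in rootsR (char_poly (adj_mx R e)) -> lam <= spec_rad R e.
Proof. by move=> root_lam; apply: le_bigmax_seq. Qed.

Lemma spec_rad_le c :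
  0 <= c -> (forall lam, lam \in rootsR (char_poly (adj_mx R e)) -> lam <= c) ->
  spec_rad R e <= c.
Proof. by move=> c_ge0 roots_le; rewrite /spec_rad big_seq; apply: bigmax_le. Qed.

Lemma spec_rad_root : spec_rad R e != 0 -> spec_rad R e \in rootsR (char_poly (adj_mx R e)).
Proof.
rewrite /spec_rad big_seq; elim/big_rec: _ => [|lam m root_lam IHm]; first by rewrite eqxx.
by rewrite maxEle; case: ifP => // _ /IHm.
Qed.

Lemma sqrt_le_spec_rad_complete_bipartite a b :
  is_complete_bipartite e a b -> (0 < a)%N -> (0 < b)%N ->
  Num.sqrt (a * b)%:R <= spec_rad R e.
Proof.
move=> [A [card_A [card_NA eA]]] a_gt0 b_gt0.
set lam : R := Num.sqrt (a * b)%:R.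
have b_neq0 : b%:R != 0 :> R by rewrite pnatr_eq0 -lt0n.
apply: le_spec_rad; apply/root_adj_mxP.
exists (fun x => if x \in A then 1 else lam / b%:R).
  have [x xA] : exists x, x \in A by apply/set0Pn; rewrite -card_gt0 card_A.
  by exists x; rewrite xA oner_eq0.
move=> y; case: (boolP (y \in A)) => yA.
  rewrite (eq_bigl (fun x => x \in ~: A)) => [|x]; last by rewrite eA yA inE; case: (x \in A).
  rewrite (eq_bigr (fun _ => lam / b%:R)) => [|x]; last by rewrite inE => /negPf ->.
  by rewrite sumr_const card_NA -[_ *+ b]mulr_natr divfK // mulr1.
rewrite (eq_bigl (fun x => x \in A)) => [|x]; last first.
  by rewrite eA; case: (x \in A) (y \in A) yA => [] [].
rewrite (eq_bigr (fun _ => 1)) => [|x ->] //; rewrite sumr_const card_A.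
by rewrite mulrA -expr2 sqr_sqrtr ?ler0n // natrM mulfK.
Qed.

End AdjacencySpectrum.

Section BipartiteSpectrum.
Local Open Scope ring_scope.
Variables (R : rcfType) (T : finType) (e : rel T) (X : {set T}).
Hypotheses (esym : symmetric e) (bipX : forall x y, e x y -> (x \in X) != (y \in X)).

Lemma spec_rad_le_sqrt_edges : spec_rad R e <= Num.sqrt (\sum_(y in X) deg e y)%:R.
Proof.
apply: spec_rad_le => [|lam /root_adj_mxP [w w_neq0 w_eigen]]; first exact: sqrtr_ge0.
apply: le_trans (ler_norm lam) _; rewrite -sqrtr_sqr ler_wsqrtr //.
exact: (eigen_sqr_le_edges w_eigen esym bipX w_neq0).
Qed.

Lemma spec_rad_eq_sqrt_edges :
  (0 < \sum_(y in X) deg e y)%N -> spec_rad R e = Num.sqrt (\sum_(y in X) deg e y)%:R ->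
  exists P Q : {set T}, [/\ P \subset X, Q \subset ~: X & complete_between e P Q].
Proof.
move=> m_gt0 rho_eq.
have rho_neq0 : spec_rad R e != 0 by rewrite rho_eq sqrtr_eq0 -ltNge ltr0n.
have [w w_neq0 w_eigen] := (root_adj_mxP _ _).1 (spec_rad_root rho_neq0).
have rho_sqr : spec_rad R e ^+ 2 = (\sum_(y in X) deg e y)%:R.
  by rewrite rho_eq sqr_sqrtr ?ler0n.
have supp := eigen_sqr_eq_edges w_eigen esym bipX w_neq0 rho_neq0 rho_sqr.
exists [set x in X | w x != 0], [set y in ~: X | w y != 0].
split; try by apply/subsetP => x; rewrite inE => /andP[].
move=> x y; rewrite !inE; case: (boolP (x \in X)) => xX; case: (boolP (y \in X)) => yX /=.
- by rewrite andbF orbF; apply/negbTE/negP => /bipX; rewrite xX yX.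
- by rewrite orbF; apply: supp.
- by rewrite esym supp // andbC.
- by rewrite andbF; apply/negbTE/negP => /bipX; rewrite (negPf xX) (negPf yX).
Qed.

End BipartiteSpectrum.

Local Open Scope ring_scope.

Theorem mainTheorem3 (R : rcfType) (T : finType) (e : rel T) (k : nat) :
  simple_graph e ->
  (2 <= k)%N ->
  (11 * k - 4 <= #|T|)%N ->
  bipartite e ->
  ~ contains_kP3 e k ->
  spec_rad R e <= Num.sqrt (((k - 1) * (#|T| - k + 1))%N%:R) /\
  (spec_rad R e = Num.sqrt (((k - 1) * (#|T| - k + 1))%N%:R) <->
   is_complete_bipartite e (k - 1) (#|T| - k + 1)).
Proof.
move=> [esym eirr] k_gt1 n_large [X bipX] free.
have edges_le : (\sum_(y in X) deg e y <= (k - 1) * (#|T| - k + 1))%N.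
  have := degree_sum_kP3_free k_gt1 esym eirr (fun x y _ => in_setT x) bipX free.
  by rewrite cardsT (degree_sum_sides esym bipX) leq_pmul2l // => /(_ n_large).
have rho_le_edges := spec_rad_le_sqrt_edges R esym bipX.
have rho_le : spec_rad R e <= Num.sqrt ((k - 1) * (#|T| - k + 1))%:R.
  by apply: le_trans rho_le_edges _; rewrite ler_wsqrtr // ler_nat.
split=> //; split=> [rho_eq | K_ab]; last first.
  by apply/eqP; rewrite eq_le rho_le; apply: sqrt_le_spec_rad_complete_bipartite K_ab _ _; lia.
have edges_eq : (\sum_(y in X) deg e y = (k - 1) * (#|T| - k + 1))%N.
  apply/eqP; rewrite eqn_leq edges_le -(ler_nat R) -ler_sqrt ?ler0n // -rho_eq.
  exact: rho_le_edges.
have edges_gt0 : (0 < \sum_(y in X) deg e y)%N by rewrite edges_eq muln_gt0; lia.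
have rho_edges : spec_rad R e = Num.sqrt (\sum_(y in X) deg e y)%:R by rewrite edges_eq.
have [P [Q [sub_PX sub_QNX ePQ]]] := spec_rad_eq_sqrt_edges esym bipX edges_gt0 rho_edges.
apply: (complete_between_extremal esym k_gt1 n_large _ ePQ free).
  by rewrite disjoints_subset (subset_trans sub_PX) // subsetC.
by rewrite -(sum_deg_complete_between sub_PX sub_QNX ePQ).
Qed.
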